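(* Let $c\ge 1$, let $\ell$ be a $c$-approximate pseudo-metric on $\mathcal{Y}$, and let $\mathcal{H}\subseteq\mathcal{Y}^{\mathcal{X}}$ satisfy $\operatorname{diam}(\mathcal{H})<\infty$. Then every scaled Littlestone tree $\mathcal{T}$ realizable by $\mathcal{H}$ has a branch $b$ such that $\sum_{t}\gamma_{b_{\le t}}\le 4c\,\Phi(\mathcal{H})$ (sum over all internal nodes on the branch; over $t=0,\dots,D-1$ if the depth $D$ is finite). Consequently $\mathbb{D}_{\mathrm{onl}}(\mathcal{H})\le 4c\,\Phi(\mathcal{H})$.
   Context: Let $\mathcal{X}$ be a set (instance domain), $\mathcal{Y}$ a set (label space), $\ell:\mathcal{Y}\times\mathcal{Y}\to\mathbb{R}_{\ge0}$ a loss. For $c\ge1$, $\ell$ is a $c$-approximate pseudo-metric if $\ell(y,y)=0$, $\ell(y_1,y_2)=\ell(y_2,y_1)$, and $\ell(y_1,y_2)\le c(\ell(y_1,y_3)+\ell(y_2,y_3))$ for all $y_1,y_2,y_3\in\mathcal{Y}$. For $\mathcal{H}\subseteq\mathcal{Y}^{\mathcal{X}}$ define $d_\ell(f,g)=\sup_{x\in\mathcal{X}}\ell(f(x),g(x))$ and $\operatorname{diam}(\mathcal{H})=\sup_{f,g\in\mathcal{H}}d_\ell(f,g)$. For $U\subseteq\mathcal{H}$ and $\varepsilon>0$, $N(U,\varepsilon)$ is the minimum cardinality of a set $S\subseteq\mathcal{H}$ such that every $u\in U$ has some $s\in S$ with $d_\ell(u,s)\le\varepsilon$ ($+\infty$ if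 no finite such set exists). The entropy potential is $\Phi(U)=\int_0^{\operatorname{diam}(\mathcal{H})}\log_2 N(U,\varepsilon)\,d\varepsilon\in[0,+\infty]$. A scaled Littlestone tree of depth $D\le\infty$ is a complete binary tree whose internal nodes $u\in\{0,1\}^{<D}$ are labeled by $x_u\in\mathcal{X}$ and whose two outgoing edges are labeled $s_{u,0},s_{u,1}\in\mathcal{Y}$; the gap at $u$ is $\gamma_u=\ell(s_{u,0},s_{u,1})$. It is realizable by $\mathcal{H}$ if for every branch $b\in\{0,1\}^D$ and every finite $n\le D$ there is $h\in\mathcal{H}$ with $h(x_{b_{\le t}})=s_{b_{\le t},b_{t+1}}$ for $t=0,\dots,n-1$, where $b_{\le t}$ is the length-$t$ prefix of $b$. The online dimension is $\mathbb{D}_{\mathrm{onl}}(\mathcal{H})=\sup_{\mathcal{T}}\inf_{b}\sum_{t=0}^{D(\mathcal{T})-1}\gamma_{b_{\le t}}$, the sup over scaled Littlestone trees $\mathcal{T}$ realizable by $\mathcal{H}$ (of any depth $D(\mathcal{T})\le\infty$) and the inf over branches $b$ of $\mathcal{T}$. *)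

From HB Require Import structures.
From mathcomp Require Import all_boot all_order all_algebra.
From mathcomp Require Import all_classical all_reals all_analysis.
Set Implicit Arguments. Unset Strict Implicit. Unset Printing Implicit Defensive.
Import Order.TTheory GRing.Theory Num.Theory.
Local Open Scope classical_set_scope.
Local Open Scope ring_scope.

Section Defs.
Variables (R : realType) (X Y : Type).

Definition approx_pseudo_metric (c : R) (l : Y -> Y -> R) : Prop :=
  (forall y1 y2, 0 <= l y1 y2) /\
  (forall y, l y y = 0) /\
  (forall y1 y2, l y1 y2 = l y2 y1) /\
  (forall y1 y2 y3, l y1 y2 <= c * (l y1 y3 + l y2 y3)).

(* d_l(f,g) = sup_x l(f x, g x)  (sup of nonnegative reals, empty sup = 0) *)
Definition dl (l : Y -> Y -> R) (f g : X -> Y) : \bar R :=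
  ereal_sup ([set 0%E] `|` range (fun x => (l (f x) (g x))%:E)).

Definition diam (l : Y -> Y -> R) (H : set (X -> Y)) : \bar R :=
  ereal_sup ([set 0%E] `|` [set dl l f g | f in H & g in H]).

(* N(U, e): least n such that some family of n elements of H e-covers U;
   +oo if no finite such family exists (ereal_inf of the empty set). *)
Definition covers (l : Y -> Y -> R) (H U : set (X -> Y)) (e : R) (n : nat) : Prop :=
  exists S : 'I_n -> (X -> Y),
    (forall i, H (S i)) /\
    (forall u, U u -> exists i, (dl l u (S i) <= e%:E)%E).

Definition covering_number (l : Y -> Y -> R) (H U : set (X -> Y)) (e : R) : \bar R :=
  ereal_inf [set (n%:R)%:E | n in covers l H U e].

Definition log2e (x : \bar R) : \bar R :=
  match x with
  | r%:E => (ln r / ln 2)%:E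
  | +oo%E => +oo%E
  | -oo%E => -oo%E
  end.

Definition entropy_potential (l : Y -> Y -> R) (H U : set (X -> Y)) : \bar R :=
  (\int[@lebesgue_measure R]_(e in [set e : R | (0%E <= e%:E <= diam l H)%E])
     log2e (covering_number l H U e))%E.

(* Scaled Littlestone trees: nodes are bit-sequences u with size u < depth;
   depth = None means infinite depth. *)
Record sltree := SLTree {
  depth : option nat;
  xlab : seq bool -> X;
  slab : seq bool -> bool -> Y }.

Definition lt_depth (T : sltree) (n : nat) : Prop :=
  match depth T with None => True | Some D => (n < D)%N end.
Definition le_depth (T : sltree) (n : nat) : Prop :=
  match depth T with None => True | Some D => (n <= D)%N end.

Definition prefix (b : nat -> bool) (t : nat) : seq bool := mkseq b t.

Definition gap (l : Y -> Y -> R) (T : sltree) (u : seq bool) : R :=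
  l (slab T u false) (slab T u true).

(* a branch is an infinite bit sequence; only its first D bits matter *)
Definition realizable (H : set (X -> Y)) (T : sltree) : Prop :=
  forall (b : nat -> bool) (n : nat), le_depth T n ->
    exists h, H h /\
      forall t, (t < n)%N -> h (xlab T (prefix b t)) = slab T (prefix b t) (b t).

Definition branch_sum (l : Y -> Y -> R) (T : sltree) (b : nat -> bool) : \bar R :=
  match depth T with
  | Some D => (\sum_(t < D) (gap l T (prefix b t))%:E)%E
  | None => (\sum_(0 <= t <oo) (gap l T (prefix b t))%:E)%E
  end.

Definition online_dim (l : Y -> Y -> R) (H : set (X -> Y)) : \bar R :=
  ereal_sup [set ereal_inf [set branch_sum l T b | b in [set: nat -> bool]]
            | T in realizable H].

End Defs.

From Pilot Require Import Defs.
From HB Require Import structures.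
From mathcomp Require Import all_boot all_order all_algebra.
From mathcomp Require Import all_classical all_reals all_analysis.
From mathcomp Require Import measurable_realfun.
From mathcomp Require Import zify ring lra.
Import Order.TTheory GRing.Theory Num.Theory.
Set Implicit Arguments. Unset Strict Implicit.
Local Open Scope classical_set_scope.
Local Open Scope ring_scope.

(* Let a node have version space V and edge labels at distance g, and let
   V0, V1 be the parts of V consistent with either label.  At every scale
   e < g / (2 c) no e-ball can meet both V0 and V1 (approximate triangle
   inequality), so N(V0, e) + N(V1, e) <= N(V, e), and by AM-GM
   log N(V0, e) + log N(V1, e) + 2 <= 2 log N(V, e).  Integrating over e gives
   Phi(V0) + Phi(V1) + g / c <= 2 Phi(V), so the child of smaller potential has
   Phi lowered by at least g / (2 c).  Along the branch that always descends to
   that child, the gaps therefore sum to at most 2 c Phi(H). *)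

Section Covering.
Variables (R : realType) (X Y : Type) (l : Y -> Y -> R) (H : set (X -> Y)).
Local Open Scope ereal_scope.

Lemma le_dl (f g : X -> Y) x : (l (f x) (g x))%:E <= dl l f g.
Proof. by apply: ereal_sup_ubound; right; exists x. Qed.

Lemma dl_le_at (f g : X -> Y) x e : dl l f g <= e%:E -> (l (f x) (g x) <= e)%R.
Proof. by move=> le_e; rewrite -lee_fin (le_trans (le_dl f g x)). Qed.

Lemma le_diam f g : H f -> H g -> dl l f g <= diam l H.
Proof. by move=> Hf Hg; apply: ereal_sup_ubound; right; exists f => //; exists g. Qed.

Lemma diam_ge0 : 0 <= diam l H.
Proof. by apply: ereal_sup_ubound; left. Qed.

(* The values of covering numbers; [log2e] is monotone only on these, since
   [ln 0 = 0] while [ln] is negative on [(0, 1)]. *)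
Definition nat_or_pinfty (z : \bar R) := z = +oo \/ exists m : nat, z = m%:R%:E.

Lemma covering_number_le U e n :
  covers l H U e n -> covering_number l H U e <= n%:R%:E.
Proof. by move=> cv; apply: ereal_inf_lbound; exists n. Qed.

Lemma covering_number_attained U e : (exists n, covers l H U e n) ->
  exists m, covers l H U e m /\ covering_number l H U e = m%:R%:E.
Proof.
move=> ex; have ex' : exists n, `[< covers l H U e n >].
  by case: ex => n cv; exists n; apply/asboolP.
case: (ex_minnP ex') => m /asboolP cvm minm; exists m; split => //.
apply/le_anti/andP; split; first exact: covering_number_le.
apply: le_ereal_inf_tmp => _ [n cv <-].
by rewrite lee_fin ler_nat minm //; apply/asboolP.
Qed.

Lemma covering_number_pinfty U e : ~ (exists n, covers l H U e n) ->
  covering_number l H U e = +oo.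
Proof.
move=> nex; rewrite /covering_number (_ : [set _ | n in _] = set0) ?ereal_inf0//.
by apply/seteqP; split => // z [n cv _]; exfalso; apply: nex; exists n.
Qed.

Lemma covering_number_nat_or_pinfty U e :
  nat_or_pinfty (covering_number l H U e).
Proof.
have [ex|nex] := pselect (exists n, covers l H U e n).
  by right; have [m [_ ->]] := covering_number_attained ex; exists m.
by left; apply: covering_number_pinfty.
Qed.

Lemma covering_number_ge1 U e : U !=set0 -> 1 <= covering_number l H U e.
Proof.
move=> [u Uu]; apply: le_ereal_inf_tmp => _ [[|n] [S [_ cS]] <-].
  by have [[]] := cS u Uu.
by rewrite lee_fin ler1n.
Qed.

Lemma le_covering_number U U' e e' : U `<=` U' -> (e <= e')%R ->
  covering_number l H U e' <= covering_number l H U' e.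
Proof.
move=> sU ee; apply: le_ereal_inf_tmp => _ [n [S [HS cS]] <-].
apply: covering_number_le; exists S; split => // u /sU /cS [i hi]; exists i.
by rewrite (le_trans hi)// lee_fin.
Qed.

Lemma log2e_ge0 z : nat_or_pinfty z -> 0 <= log2e z.
Proof.
case=> [->|[[|m] ->]]; rewrite /log2e ?leey// lee_fin.
  by rewrite ln0// mul0r.
by rewrite divr_ge0// ln_ge0// ler1n.
Qed.

Lemma le_log2e z z' : nat_or_pinfty z -> nat_or_pinfty z' -> z <= z' ->
  log2e z <= log2e z'.
Proof.
case=> [->|[m ->]]; case=> [->|[m' ->]] //=; rewrite /log2e ?leye_eq ?leey//.
rewrite !lee_fin ler_nat => mm'; rewrite ler_pM2r ?invr_gt0 ?ln_gt0 ?ltr1n//.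
case: m mm' => [|m] mm'.
  by rewrite ln0//; case: m' {mm'} => [|m']; [rewrite ln0 | rewrite ln_ge0// ler1n].
by rewrite ler_ln ?posrE ?ltr0n ?ler_nat//; apply: leq_trans mm'.
Qed.

Lemma le_log2e_covering_number U U' e e' : U `<=` U' -> (e <= e')%R ->
  log2e (covering_number l H U e') <= log2e (covering_number l H U' e).
Proof.
move=> sU ee'; apply: le_log2e; [exact: covering_number_nat_or_pinfty..|].
exact: le_covering_number.
Qed.

Lemma log2e_covering_number_ge0 U e : 0 <= log2e (covering_number l H U e).
Proof. exact/log2e_ge0/covering_number_nat_or_pinfty. Qed.

End Covering.

Lemma covers_subfamily (R : realType) (X Y : Type) (l : Y -> Y -> R)
    (H U : set (X -> Y)) (e : R) (m : nat) (S : 'I_m -> X -> Y) (A : {set 'I_m}) :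
  (forall i, H (S i)) ->
  (forall u, U u -> exists2 i, i \in A & (dl l u (S i) <= e%:E)%E) ->
  covers l H U e #|A|.
Proof.
move=> HS cS; exists (fun k => S (enum_val k)); split => [k|u Uu]; first exact: HS.
have [i iA ui] := cS u Uu.
by exists (enum_rank_in iA i); rewrite enum_rankK_in.
Qed.

Lemma approx_pseudo_metric_le (R : realType) (Y : Type) (c : R) (l : Y -> Y -> R)
    (y0 y1 z : Y) (e : R) : 0 <= c -> approx_pseudo_metric c l ->
  l y0 z <= e -> l y1 z <= e -> l y0 y1 <= 2 * c * e.
Proof.
move=> c0 [_ [_ [_ tri]]] ey0 ey1; apply: le_trans (tri y0 y1 z) _.
by rewrite (mulrC 2) -mulrA; apply: ler_wpM2l => //; lra.
Qed.

Lemma log2_nat_split (R : realType) (m0 m1 m : nat) :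
  (0 < m0)%N -> (0 < m1)%N -> (m0 + m1 <= m)%N ->
  ln (m0%:R : R) / ln 2 + ln (m1%:R : R) / ln 2 + 2 <=
  ln (m%:R : R) / ln 2 + ln (m%:R : R) / ln 2.
Proof.
move=> m0_gt0 m1_gt0 le_m; have m_gt0 : (0 < m)%N by lia.
have ln2_gt0 : 0 < ln (2 : R) by rewrite ln_gt0 // ltr1n.
have am_gm : (m0 * m1 * 2 * 2 <= m * m)%N.
  have := leq_mul le_m le_m; have [+ _] := nat_Cauchy m0 m1.
  rewrite !expnS !expn0 !muln1; lia.
have le_ln : ln ((m0%:R : R) * m1%:R * 2 * 2) <= ln ((m%:R : R) * m%:R).
  by rewrite ler_ln ?posrE ?mulr_gt0 ?ltr0n -?natrM ?ler_nat.
rewrite !lnM ?posrE ?mulr_gt0 ?ltr0n// in le_ln.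
by rewrite -(ler_pM2r ln2_gt0) !mulrDl !divfK ?gt_eqF//; lra.
Qed.

Section Split.
Variables (R : realType) (X Y : Type) (c : R) (l : Y -> Y -> R).
Variables (H V : set (X -> Y)) (x : X) (s : bool -> Y).
Hypotheses (c_gt0 : 0 < c) (hl : approx_pseudo_metric c l).
Let V_ b := V `&` [set h | h x = s b].

(* A center within [e] of both sides would put the two labels within [2 c e] of each other. *)
Lemma covers_split e m : 2 * c * e < l (s false) (s true) -> covers l H V e m ->
  exists m0 m1,
    [/\ covers l H (V_ false) e m0, covers l H (V_ true) e m1 & (m0 + m1 <= m)%N].
Proof.
move=> e_lt [S [HS cS]].
pose A b : {set 'I_m} :=
  finset (fun i => `[< exists2 h, V_ b h & (dl l h (S i) <= e%:E)%E >]).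
have covA b : covers l H (V_ b) e #|A b|.
  apply: covers_subfamily HS _ => h Vh; have [i hi] := cS h Vh.1.
  by exists i => //; rewrite inE; apply/asboolP; exists h.
exists #|A false|, #|A true|; split => //.
suff /eqP AI0 : A false :&: A true == finset.set0.
  by rewrite -cardsUI AI0 cards0 addn0 -[leqRHS]card_ord max_card.
rewrite setI_eq0; apply/pred0P => i /=; rewrite !inE; apply/negP => /andP[].
move=> /asboolP[h0 [_ h0x] /(dl_le_at x) d0] /asboolP[h1 [_ h1x] /(dl_le_at x) d1].
have := approx_pseudo_metric_le (ltW c_gt0) hl d0 d1.
by rewrite h0x h1x; lra.
Qed.

Lemma log2_covering_number_split e :
  V_ false !=set0 -> V_ true !=set0 -> 2 * c * e < l (s false) (s true) ->
  (log2e (covering_number l H (V_ false) e) + log2e (covering_number l H (V_ true) e)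
    + 2%:E <= log2e (covering_number l H V e) + log2e (covering_number l H V e))%E.
Proof.
move=> ne0 ne1 e_lt.
have [ex|nex] := pselect (exists n, covers l H V e n); last first.
  by rewrite (covering_number_pinfty nex) /= addye ?leey.
have [m [cvm ->]] := covering_number_attained ex.
have [m0 [m1 [cv0 cv1 le_m]]] := covers_split e_lt cvm.
have [k0 [_ N0]] := covering_number_attained (ex_intro _ _ cv0).
have [k1 [_ N1]] := covering_number_attained (ex_intro _ _ cv1).
have := covering_number_le cv0; have := covering_number_ge1 l H e ne0.
have := covering_number_le cv1; have := covering_number_ge1 l H e ne1.
rewrite N0 N1 !lee_fin !ler1n !ler_nat => k1_gt0 k1m1 k0_gt0 k0m0.
by rewrite /log2e /=; apply: log2_nat_split => //; lia.
Qed.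

Lemma log2_covering_number_split_indic e : V_ false !=set0 -> V_ true !=set0 ->
  (log2e (covering_number l H (V_ false) e) + log2e (covering_number l H (V_ true) e)
    + ((\1_`]-oo, l (s false) (s true) / (2 * c)[ e)%:E
       + (\1_`]-oo, l (s false) (s true) / (2 * c)[ e)%:E)
   <= log2e (covering_number l H V e) + log2e (covering_number l H V e))%E.
Proof.
move=> ne0 ne1; rewrite indicE; case: (ltP e (l (s false) (s true) / (2 * c))).
  move=> e_lt; rewrite mem_set /= ?in_itv //= -EFinD.
  apply: log2_covering_number_split => //.
  by rewrite ltr_pdivlMr ?mulr_gt0 // mulrC in e_lt.
move=> e_ge; rewrite memNset; last by rewrite /= in_itv /= ltNge e_ge.
rewrite [false%:R]/= !adde0.
by apply: leeD; apply: le_log2e_covering_number => // h [].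
Qed.

End Split.

Lemma nonincreasing_emeasurable (R : realType) (D : set R) (f : R -> \bar R) :
  measurable D -> (forall s t, s <= t -> (f t <= f s)%E) -> measurable_fun D f.
Proof.
move=> mD f_ni; apply: (measurability _ (ErealGenOInfty.measurableE R)).
move=> /= _ [_ [a ->]] <-; apply: measurableI => //.
apply: is_interval_measurable => s t /=; rewrite !in_itv /= !andbT => fs ft u /andP[su ut].
by rewrite in_itv/= andbT (lt_le_trans ft)// f_ni.
Qed.

Section EntropyPotential.
Variables (R : realType) (X Y : Type) (l : Y -> Y -> R) (H : set (X -> Y)).
Hypothesis diam_lty : (diam l H < +oo)%E.
Let Dom := [set e : R | (0 <= e%:E <= diam l H)%E].
Let F U e := log2e (covering_number l H U e).

Let diam_fin : diam l H = (fine (diam l H))%:E.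
Proof. by rewrite fineK // ge0_fin_numE // diam_ge0. Qed.

Let Dom_itv : Dom = `[0, fine (diam l H)]%classic.
Proof.
rewrite /Dom; move: (fine _) diam_fin => d ->.
by apply/seteqP; split => e /=; rewrite in_itv /= !lee_fin.
Qed.

Let mDom : measurable Dom.
Proof. by rewrite Dom_itv; exact: measurable_itv. Qed.

Let mF U : measurable_fun Dom (F U).
Proof.
by apply: nonincreasing_emeasurable mDom _ => s t st; exact: le_log2e_covering_number.
Qed.

Lemma integral_indic_lt (a : R) : 0 <= a -> (a%:E <= diam l H)%E ->
  (\int[lebesgue_measure]_(e in Dom) (\1_`]-oo, a[ e)%:E = a%:E)%E.
Proof.
move=> a_ge0 a_le; rewrite integral_indic //.
have -> : `]-oo, a[ `&` Dom = `[0, a[%classic.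
  rewrite Dom_itv; apply/seteqP; split => e /=; rewrite !in_itv /=.
    by move=> [-> /andP[-> _]].
  by move=> /andP[-> ea]; rewrite (le_trans (ltW ea)) // -lee_fin -diam_fin.
apply: eq_trans; first exact: (lebesgue_measure_itv `[0, a[).
rewrite /= lte_fin; case: ltP => [_|a_le0]; first by rewrite sube0.
by have -> : a = 0 by apply/le_anti/andP.
Qed.

Lemma entropy_potential_ge0 U : (0 <= entropy_potential l H U)%E.
Proof. by apply: integral_ge0 => e _; exact: log2e_covering_number_ge0. Qed.

Variables (c : R) (V : set (X -> Y)) (x : X) (s : bool -> Y).
Hypotheses (c_ge1 : 1 <= c) (hl : approx_pseudo_metric c l) (VH : V `<=` H).
Let V_ b := V `&` [set h | h x = s b].
Hypotheses (ne0 : V_ false !=set0) (ne1 : V_ true !=set0).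

Lemma entropy_potential_split :
  (entropy_potential l H (V_ false) + entropy_potential l H (V_ true)
    + (l (s false) (s true) / c)%:E
   <= entropy_potential l H V + entropy_potential l H V)%E.
Proof.
set g := l (s false) (s true); have c_gt0 : 0 < c by apply: lt_le_trans c_ge1.
have g_ge0 : 0 <= g by case: hl => + _; apply.
have g_le : (g%:E <= diam l H)%E.
  have [h0 [Vh0 h0x]] := ne0; have [h1 [Vh1 h1x]] := ne1.
  by rewrite /g -h0x -h1x (le_trans (le_dl l h0 h1 x)) // le_diam //; exact: VH.
pose a := g / (2 * c).
have a_ge0 : 0 <= a by rewrite divr_ge0 // mulr_ge0 // ltW.
have a_le : (a%:E <= diam l H)%E.
  apply: le_trans g_le; rewrite lee_fin ler_pdivrMr ?mulr_gt0 //.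
  apply: ler_peMr => //; apply: le_trans c_ge1 _.
  apply: ler_peMl; first exact: ltW.
  by rewrite ler1n.
pose G e : \bar R := (\1_`]-oo, a[ e)%:E.
have mG : measurable_fun Dom G.
  by apply/measurable_EFinP; apply: measurable_indic; exact: measurable_itv.
have pt e : Dom e ->
    (F (V_ false) e + F (V_ true) e + (G e + G e) <= F V e + F V e)%E.
  by move=> _; apply: log2_covering_number_split_indic.
have -> : g / c = a + a by rewrite /a; field; exact: lt0r_neq0.
rewrite EFinD -(integral_indic_lt a_ge0 a_le) /entropy_potential -/Dom.
rewrite -!ge0_integralD //; first apply: ge0_le_integral => //.
all: by [ exact: pt
        | move=> ? _; rewrite ?adde_ge0 ?log2e_covering_number_ge0
        | do ?[apply: emeasurable_funD | exact: mF | exact: mG] ].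
Qed.

End EntropyPotential.

Lemma mkseq_nth_take (T : Type) (x0 : T) (s : seq T) k : (k <= size s)%N ->
  mkseq (nth x0 s) k = take k s.
Proof.
move=> ks; apply: (@eq_from_nth _ x0); first by rewrite size_mkseq size_take_min; lia.
by move=> i; rewrite size_mkseq => ik; rewrite nth_mkseq // nth_take.
Qed.

Lemma mine_addr_le_of_sum_le (R : realType) (a b v : \bar R) (k : R) :
  (0 <= a)%E -> (0 <= b)%E -> 0 <= k ->
  (a + b + (2 * k)%:E <= v + v)%E -> (mine a b + k%:E <= v)%E.
Proof.
move=> a_ge0 b_ge0 k_ge0; case: v => [r| |] sum_le; last 2 first.
- exact: leey.
- by move: sum_le; rewrite leNgt (lt_le_trans ltNy0) // !adde_ge0// lee_fin mulr_ge0.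
case: a b a_ge0 b_ge0 sum_le => [a| |] [b| |] //= a_ge0 b_ge0; rewrite -?EFinD ?lee_fin //.
move=> sum_le; rewrite -EFin_min -EFinD lee_fin.
have /andP[min_a min_b] : (Num.min a b <= a) && (Num.min a b <= b) by rewrite -le_min.
lra.
Qed.

Section GreedyBranch.
Variables (R : realType) (X Y : Type) (c : R) (l : Y -> Y -> R) (H : set (X -> Y)).
Hypotheses (c_ge1 : 1 <= c) (hl : approx_pseudo_metric c l).
Hypothesis diam_lty : (diam l H < +oo)%E.
Variable T : sltree X Y.
Hypothesis realT : realizable H T.

Definition version_space (u : seq bool) : set (X -> Y) := [set h | H h /\
  forall t, (t < size u)%N -> h (xlab T (take t u)) = slab T (take t u) (nth false u t)].

Let Phi u := entropy_potential l H (version_space u).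

Definition greedy_bit (u : seq bool) : bool :=
  (Phi (rcons u true) < Phi (rcons u false))%E.

Fixpoint greedy_path n :=
  if n is n'.+1 then rcons (greedy_path n') (greedy_bit (greedy_path n')) else [::].

Definition greedy_branch t := nth false (greedy_path t.+1) t.

Lemma size_greedy_path n : size (greedy_path n) = n.
Proof. by elim: n => //= n IH; rewrite size_rcons IH. Qed.

Lemma take_greedy_path t n : (t <= n)%N -> take t (greedy_path n) = greedy_path t.
Proof.
elim: n => [|n IH]; first by rewrite leqn0 => /eqP ->.
rewrite leq_eqVlt => /orP[/eqP ->|tn]; first by rewrite take_oversize // size_greedy_path.
by rewrite /= -cats1 takel_cat ?size_greedy_path // IH.
Qed.

Lemma prefix_greedy_branch t : Defs.prefix greedy_branch t = greedy_path t.
Proof.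
apply: (@eq_from_nth _ false); first by rewrite size_mkseq size_greedy_path.
move=> i; rewrite size_mkseq => it; rewrite nth_mkseq // /greedy_branch.
by rewrite -(take_greedy_path it) nth_take.
Qed.

Lemma version_space_nil : version_space [::] = H.
Proof. by apply/seteqP; split => h /=; [case | move=> Hh; split]. Qed.

Lemma version_space_sub u : version_space u `<=` H.
Proof. by move=> h []. Qed.

Lemma version_space_rcons u b : version_space (rcons u b) =
  version_space u `&` [set h | h (xlab T u) = slab T u b].
Proof.
apply/seteqP; split => h /= [].
  move=> Hh Wh; split; last first.
    have := Wh (size u); rewrite size_rcons ltnSn nth_rcons ltnn eqxx.
    by rewrite -cats1 take_size_cat //; apply.
  split => // t tu; have := Wh t; rewrite size_rcons ltnS (ltnW tu) -cats1.
  by rewrite takel_cat ?(ltnW tu) // nth_cat tu; apply.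
move=> [Hh Wh] hb; split => // t; rewrite size_rcons ltnS leq_eqVlt.
case/orP => [/eqP ->|tu]; first by rewrite nth_rcons ltnn eqxx -cats1 take_size_cat.
by rewrite -cats1 takel_cat ?(ltnW tu) // nth_cat tu; apply: Wh.
Qed.

Lemma version_space_neq0 u : le_depth T (size u) -> version_space u !=set0.
Proof.
move=> du; have [h [Hh hh]] := realT (nth false u) du.
exists h; split => // t tu; have := hh t tu.
by rewrite /Defs.prefix mkseq_nth_take // ltnW.
Qed.

Lemma gap_ge0 u : 0 <= gap l T u.
Proof. by rewrite /gap; case: hl => + _; apply. Qed.

Lemma entropy_potential_greedy_child u :
  Phi (rcons u (greedy_bit u)) = mine (Phi (rcons u false)) (Phi (rcons u true)).
Proof.
by rewrite /greedy_bit; case: ltP.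
Qed.

Lemma greedy_step n : lt_depth T n ->
  (Phi (greedy_path n.+1) + (gap l T (greedy_path n) / (2 * c))%:E
   <= Phi (greedy_path n))%E.
Proof.
move=> dn; set u := greedy_path n; have c_gt0 : 0 < c by apply: lt_le_trans c_ge1.
have ne b : (version_space u `&` [set h | h (xlab T u) = slab T u b]) !=set0.
  rewrite -version_space_rcons; apply: version_space_neq0.
  rewrite size_rcons size_greedy_path.
  by move: dn; rewrite /le_depth /lt_depth; case: depth.
have := entropy_potential_split diam_lty c_ge1 hl (@version_space_sub u) (ne false) (ne true).
rewrite -!version_space_rcons /= entropy_potential_greedy_child => split_le.
apply: mine_addr_le_of_sum_le; rewrite ?entropy_potential_ge0 //.
  by rewrite divr_ge0 ?gap_ge0 // mulr_ge0 // ltW.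
by rewrite (_ : 2 * _ = gap l T u / c) //; field; exact: lt0r_neq0.
Qed.

Lemma greedy_potential_sum n : le_depth T n ->
  (Phi (greedy_path n) + \sum_(t < n) (gap l T (greedy_path t) / (2 * c))%:E
   <= entropy_potential l H H)%E.
Proof.
elim: n => [|n IH] dn; first by rewrite big_ord0 adde0 /Phi version_space_nil.
have [dn' ltn] : le_depth T n /\ lt_depth T n.
  by move: dn; rewrite /le_depth /lt_depth; case: depth => // D nD; split => //; exact: ltnW.
apply: le_trans (IH dn'); rewrite big_ord_recr /= addeA addeAC.
by rewrite leeD2r // greedy_step.
Qed.

Lemma greedy_branch_partial_sum n : le_depth T n ->
  (\sum_(t < n) (gap l T (Defs.prefix greedy_branch t))%:E
   <= (2 * c)%:E * entropy_potential l H H)%E.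
Proof.
move=> dn; have c2_gt0 : 0 < 2 * c by rewrite mulr_gt0 // (lt_le_trans _ c_ge1).
have := greedy_potential_sum dn; rewrite sumEFin -mulr_suml => bound.
under eq_bigr do rewrite prefix_greedy_branch.
rewrite sumEFin -(divfK (lt0r_neq0 c2_gt0) (\sum_(t < n) _)) EFinM muleC.
apply: lee_wpmul2l; first by rewrite lee_fin ltW.
by apply: le_trans bound; rewrite lee_paddl // entropy_potential_ge0.
Qed.

Lemma greedy_branch_sum :
  (branch_sum l T greedy_branch <= (2 * c)%:E * entropy_potential l H H)%E.
Proof.
rewrite /branch_sum; case dT: (depth T) => [D|].
  by apply: greedy_branch_partial_sum; rewrite /le_depth dT.
apply: lime_le; first by apply: is_cvg_nneseries => t _ _; rewrite lee_fin gap_ge0.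
by apply: nearW => n; rewrite big_mkord greedy_branch_partial_sum // /le_depth dT.
Qed.

End GreedyBranch.

Theorem theorem3p1 (R : realType) (X Y : Type) (c : R) (l : Y -> Y -> R)
    (H : set (X -> Y)) :
  1 <= c ->
  approx_pseudo_metric c l ->
  (diam l H < +oo)%E ->
  (forall T : sltree X Y, realizable H T ->
     exists b : nat -> bool,
       (branch_sum l T b <= (4 * c)%:E * entropy_potential l H H)%E) /\
  (online_dim l H <= (4 * c)%:E * entropy_potential l H H)%E.
Proof.
move=> c_ge1 hl diam_lty.
have tree_bound T : realizable H T ->
    exists b, (branch_sum l T b <= (4 * c)%:E * entropy_potential l H H)%E.
  move=> realT; exists (greedy_branch l H T).
  apply: le_trans (greedy_branch_sum c_ge1 hl diam_lty realT) _.
  by apply: lee_wpmul2r; [exact: entropy_potential_ge0 | rewrite lee_fin; lra].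
split => //; apply: ge_ereal_sup => _ [T realT <-].
have [b b_le] := tree_bound T realT.
by apply: le_trans b_le; apply: ereal_inf_lbound; exists b.
Qed.
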